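(* Let $F$ be a field of characteristic zero, $H$ an abelian group, and $A=\bigoplus_{h\in H}A_h$ an associative $H$-graded algebra whose $H$-grading is regular, with the function $\theta:H\times H\to F^*$ from the definition of regularity. Then $\theta$ is a skew-symmetric bicharacter and $A$ is $\theta$-commutative, i.e., $A$ is an $H$-graded color commutative superalgebra.
   Context: $H$ is written additively. An $H$-grading on $A$ is regular if (1) for every $n$ and every $(h_1,\dots,h_n)\in H^n$ there exist $a_i\in A_{h_i}$ with $a_1\cdots a_n\neq0$, and (2) for all $g,h\in H$ there exists $\theta(g,h)\in F^*$ such that $ab=\theta(g,h)ba$ for all $a\in A_g$, $b\in A_h$. A skew-symmetric bicharacter is a map $\beta:H\times H\to F^*$ with $\beta(g+h,k)=\beta(g,k)\beta(h,k)$, $\beta(g,h+k)=\beta(g,h)\beta(g,k)$, $\beta(g,h)=\beta(h,g)^{-1}$; $A$ is $\beta$-commutative (a color commutative superalgebra) if $ab=\beta(g,h)ba$ for all $a\in A_g$, $b\in A_h$. *)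

From mathcomp Require Import all_boot all_order all_algebra.
Set Implicit Arguments. Unset Strict Implicit. Unset Printing Implicit Defensive.
Import GRing.Theory.
Local Open Scope ring_scope.

Definition is_assoc_algebra (F : fieldType) (A : lmodType F) (mul : A -> A -> A) : Prop :=
  [/\ forall (k : F) (x y z : A), mul (k *: x + y) z = k *: mul x z + mul y z,
      forall (k : F) (x y z : A), mul x (k *: y + z) = k *: mul x y + mul x z
    & forall x y z : A, mul x (mul y z) = mul (mul x y) z].

Definition is_H_grading (F : fieldType) (A : lmodType F) (mul : A -> A -> A)
    (H : zmodType) (G : H -> {pred A}) : Prop :=
  [/\
      forall h, 0 \in G h /\ (forall (k : F) x y, x \in G h -> y \in G h -> k *: x + y \in G h),
      forall a : A, exists (s : seq H) (c : H -> A),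
        (forall h, c h \in G h) /\ a = \sum_(h <- s) c h,
      forall (s : seq H) (c : H -> A), uniq s -> (forall h, c h \in G h) ->
        \sum_(h <- s) c h = 0 -> forall h, h \in s -> c h = 0
    &
      forall g h a b, a \in G g -> b \in G h -> mul a b \in G (g + h)].

(* product a_0 a_1 ... a_n, left-associated (A is associative anyway) *)
Definition prod_list (A : Type) (mul : A -> A -> A) (a0 : A) (s : seq A) : A :=
  foldl mul a0 s.

Definition is_regular_grading (F : fieldType) (A : lmodType F) (mul : A -> A -> A)
    (H : zmodType) (G : H -> {pred A}) (theta : H -> H -> F) : Prop :=
  [/\
      forall (n : nat) (hs : 'I_n.+1 -> H), exists a : 'I_n.+1 -> A,
        (forall i, a i \in G (hs i)) /\
        prod_list mul (a ord0) [seq a (lift ord0 i) | i : 'I_n] != 0,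
      forall g h, theta g h != 0
    &
      forall g h a b, a \in G g -> b \in G h -> mul a b = theta g h *: mul b a].

Definition skew_symmetric_bicharacter (F : fieldType) (H : zmodType) (beta : H -> H -> F) : Prop :=
  [/\ forall g h, beta g h != 0,
      forall g h k, beta (g + h) k = beta g k * beta h k,
      forall g h k, beta g (h + k) = beta g h * beta g k
    & forall g h, beta g h = (beta h g)^-1].

Definition color_commutative (F : fieldType) (A : lmodType F) (mul : A -> A -> A)
    (H : zmodType) (G : H -> {pred A}) (beta : H -> H -> F) : Prop :=
  forall g h a b, a \in G g -> b \in G h -> mul a b = beta g h *: mul b a.

From mathcomp Require Import all_boot all_order all_algebra.
Set Implicit Arguments. Unset Strict Implicit. Unset Printing Implicit Defensive.
Import GRing.Theory.
Local Open Scope ring_scope.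

(* Regularity supplies homogeneous elements of any prescribed degrees with a
   nonzero product.  Commuting x y (resp. x y z) in two different orders then
   yields an identity  c *: p = p  with p != 0, forcing the scalar c to be 1;
   for pairs this gives theta g h * theta h g = 1, for triples
   theta (g + h) k = theta g k * theta h k.  Additivity in the second argument
   follows from these two by inversion. *)

Lemma scalerIl (F : fieldType) (V : lmodType F) (x : V) (p q : F) :
  x != 0 -> p *: x = q *: x -> p = q.
Proof.
move=> x_neq0 /eqP; rewrite -subr_eq0 -scalerBl scaler_eq0 (negbTE x_neq0) orbF.
by rewrite subr_eq0 => /eqP.
Qed.

Section RegularGrading.

Variables (F : fieldType) (A : lmodType F) (mul : A -> A -> A).
Variables (H : zmodType) (G : H -> {pred A}) (theta : H -> H -> F).

Hypothesis mul_alg : is_assoc_algebra mul.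
Hypothesis mulG : forall g h a b, a \in G g -> b \in G h -> mul a b \in G (g + h).
Hypothesis regular : is_regular_grading mul G theta.

Let mulA : forall x y z, mul x (mul y z) = mul (mul x y) z.
Proof. by case: mul_alg. Qed.

Let commG : forall g h a b,
  a \in G g -> b \in G h -> mul a b = theta g h *: mul b a.
Proof. by case: regular. Qed.

Lemma mulx0 x : mul x 0 = 0.
Proof.
case: mul_alg => _ linr _; have := linr 1 x 0 0; rewrite !scale1r addr0 => e.
by apply: (@addrI _ (mul x 0)); rewrite -e addr0.
Qed.

Lemma mul0x x : mul 0 x = 0.
Proof.
case: mul_alg => linl _ _; have := linl 1 0 0 x; rewrite !scale1r addr0 => e.
by apply: (@addrI _ (mul 0 x)); rewrite -e addr0.
Qed.

Lemma mulxZ k x y : mul x (k *: y) = k *: mul x y.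
Proof. by case: mul_alg => _ linr _; have := linr k x y 0; rewrite !addr0 mulx0 addr0. Qed.

Lemma mulZx k x y : mul (k *: x) y = k *: mul x y.
Proof. by case: mul_alg => linl _ _; have := linl k x 0 y; rewrite !addr0 mul0x addr0. Qed.

Lemma regular_pair g h :
  exists a b, [/\ a \in G g, b \in G h & mul a b != 0].
Proof.
case: regular => reg _ _.
have [a [aG]] := reg 1%N (fun i : 'I_2 => nth g [:: g; h] i).
rewrite /prod_list /image_mem enum_ordSl enum_ord0 /= => ab_neq0.
by exists (a ord0), (a (lift ord0 ord0)).
Qed.

Lemma regular_triple g h k :
  exists a b c, [/\ a \in G g, b \in G h, c \in G k & mul (mul a b) c != 0].
Proof.
case: regular => reg _ _.
have [a [aG]] := reg 2%N (fun i : 'I_3 => nth g [:: g; h; k] i).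
rewrite /prod_list /image_mem !enum_ordSl enum_ord0 /= => abc_neq0.
by exists (a ord0), (a (lift ord0 ord0)), (a (lift ord0 (lift ord0 ord0))).
Qed.

Lemma theta_mulC_inv g h : theta g h * theta h g = 1.
Proof.
have [a [b [aG bG ab_neq0]]] := regular_pair g h.
apply: (scalerIl ab_neq0).
by rewrite scale1r -scalerA -(commG bG aG) -(commG aG bG).
Qed.

Lemma theta_skew g h : theta g h = (theta h g)^-1.
Proof.
case: regular => _ theta_neq0 _.
by apply: (mulIf (theta_neq0 h g)); rewrite mulVf // theta_mulC_inv.
Qed.

Lemma theta_addl g h k : theta (g + h) k = theta g k * theta h k.
Proof.
have [a [b [c [aG bG cG abc_neq0]]]] := regular_triple g h k.
have abG := mulG aG bG.
have cab_neq0 : mul c (mul a b) != 0.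
  by apply: contraNneq abc_neq0; rewrite (commG abG cG) => ->; rewrite scaler0.
apply: (scalerIl cab_neq0).
rewrite -(commG abG cG) -mulA (commG bG cG) mulxZ mulA (commG aG cG) mulZx.
by rewrite scalerA -mulA mulrC.
Qed.

Lemma theta_addr g h k : theta g (h + k) = theta g h * theta g k.
Proof. by rewrite theta_skew theta_addl invfM -!theta_skew. Qed.

Lemma theta_skew_bicharacter : skew_symmetric_bicharacter theta.
Proof.
case: regular => _ theta_neq0 _.
by split; [exact: theta_neq0 | exact: theta_addl | exact: theta_addr | exact: theta_skew].
Qed.

End RegularGrading.

Theorem mainTheorem11 (F : fieldType) (A : lmodType F) (mul : A -> A -> A)
    (H : zmodType) (G : H -> {pred A}) (theta : H -> H -> F) :
  [pchar F] =i pred0 ->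
  is_assoc_algebra mul ->
  is_H_grading mul G ->
  is_regular_grading mul G theta ->
  skew_symmetric_bicharacter theta /\ color_commutative mul G theta.
Proof.
move=> _ mul_alg [_ _ _ mulG] regular.
split; first exact: theta_skew_bicharacter mul_alg mulG regular.
by case: regular.
Qed.
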